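(* Let $b_{10}>0$, $b_{11}\ge0$, $c_{01}\ge0$, $c_{11}\ge0$, and define $\gamma'=\frac{c_{01}}{b_{10}}$, $\delta'=\frac{b_{10}-b_{11}+c_{11}-c_{01}}{b_{10}}$. Let $\mathcal{F}=\{(P_{11},t): P_{11}\in[0,1],\ P_{11}-1\le t\le P_{11}\}$ and $\mathcal{P}=\{(P_{11},t)\in\mathcal{F}: t>\gamma'+\delta'P_{11}\}$. If $c_{11}>b_{11}$, then $\mathcal{P}=\emptyset$.
   Context: Double binary causal classification: $P_{11}$ is the probability of the positive outcome under the positive treatment, $t=P_{11}-P_{10}$ the estimated individual treatment effect, $b_{ij}$ the benefit of outcome $i$ under treatment $j$ and $c_{ij}$ the cost of outcome $i$ under treatment $j$, normalized so that $c_{00}=c_{10}=0$, $b_{00}=b_{01}=0$. The cost-sensitive causal decision boundary is $t=\gamma'+\delta'P_{11}$ and $\mathcal{P}$ is the positive treatment set. *)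

From mathcomp Require Import all_boot all_order all_algebra.
From mathcomp Require Import boolp classical_sets.
Set Implicit Arguments. Unset Strict Implicit. Unset Printing Implicit Defensive.
Import Order.TTheory GRing.Theory Num.Theory.
Local Open Scope ring_scope.
Local Open Scope classical_set_scope.

Definition gamma' {R : realFieldType} (b10 c01 : R) : R := c01 / b10.

Definition delta' {R : realFieldType} (b10 b11 c01 c11 : R) : R :=
  (b10 - b11 + c11 - c01) / b10.

Definition feasible_set {R : realFieldType} : set (R * R) :=
  [set p | 0 <= p.1 <= 1 /\ p.1 - 1 <= p.2 <= p.1].

Definition positive_set {R : realFieldType} (b10 b11 c01 c11 : R) : set (R * R) :=
  [set p | feasible_set p /\ gamma' b10 c01 + delta' b10 b11 c01 c11 * p.1 < p.2].

From mathcomp Require Import all_boot all_order all_algebra.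
From mathcomp Require Import boolp classical_sets.
From mathcomp Require Import ring.
Import Order.TTheory GRing.Theory Num.Theory.
Local Open Scope ring_scope.
Local Open Scope classical_set_scope.

(* On the feasible set t <= P11, and when c11 >= b11 the decision boundary
   lies above the diagonal t = P11 on [0, 1]: its excess over P11 is
   (c01 (1 - P11) + (c11 - b11) P11) / b10, a nonnegative combination.
   Hence no feasible point lies strictly above the boundary. *)

Lemma decision_boundary_sub_diag (R : realFieldType) (b10 b11 c01 c11 p : R) :
  b10 != 0 ->
  gamma' b10 c01 + delta' b10 b11 c01 c11 * p - p
    = (c01 * (1 - p) + (c11 - b11) * p) / b10.
Proof. by move=> b10_neq0; rewrite /gamma' /delta'; field. Qed.

Lemma diag_le_decision_boundary (R : realFieldType) (b10 b11 c01 c11 p : R) :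
  0 < b10 -> 0 <= c01 -> b11 <= c11 -> 0 <= p <= 1 ->
  p <= gamma' b10 c01 + delta' b10 b11 c01 c11 * p.
Proof.
move=> b10_gt0 c01_ge0 b11_le_c11 /andP[p_ge0 p_le1].
rewrite -subr_ge0 decision_boundary_sub_diag ?gt_eqF //.
apply: divr_ge0; last exact: ltW.
by apply: addr_ge0; apply: mulr_ge0; rewrite ?subr_ge0.
Qed.

Theorem corollary1 (R : realFieldType) (b10 b11 c01 c11 : R)
  (hb10 : 0 < b10) (hb11 : 0 <= b11) (hc01 : 0 <= c01) (hc11 : 0 <= c11)
  (hcb : b11 < c11) :
  positive_set b10 b11 c01 c11 = set0.
Proof.
apply/seteqP; split=> // -[p t] [[p01 /andP[_ t_le_p]]] /=.
apply/negP; rewrite -leNgt (le_trans t_le_p) //.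
exact: diag_le_decision_boundary (ltW hcb) p01.
Qed.
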